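(* Let $(V,L,\varphi,E)$ be a valuation system such that $\varphi$ is $\Pi$-extendible. Then the valuation system $(V,\Pi L,\Pi\varphi,E)$ is $\Pi$-complete.
   Context: A valuation system $(V,L,\varphi,E)$ consists of: (i) a lattice $V$ which is $\sigma$-distributive, i.e. for every $a\in V$ and every sequence $(b_n)$ in $V$ whose infimum exists, $\bigwedge_n(a\vee b_n)$ exists and equals $a\vee\bigwedge_n b_n$, and dually for suprema; (ii) a sublattice $L$ of $V$; (iii) a partially ordered abelian group $E$ which is R-complete: whenever $x_1\ge x_2\ge\cdots$ and $y_1\ge y_2\ge\cdots$ in $E$ are such that $\bigwedge_n(x_n+y_n)$ exists, then $\bigwedge_n x_n$ and $\bigwedge_n y_n$ exist, and dually for increasing sequences and suprema; (iv) a valuation $\varphi:L\to E$, i.e. an order-preserving map with $\varphi(a\wedge b)+\varphi(a\vee b)=\varphi(a)+\varphi(b)$. A decreasing sequence $a_1\ge a_2\ge\cdots$ in $L$ is $\varphi$-convergent if $\bigwedge_n a_n$ exists in $V$ and $\bigwedge_n\varphi(a_n)$ exists in $E$. The system is $\Pi$-complete if for every $\varphi$-convergent decreasing sequence $(a_n)$ in $L$ we have $\bigwedge_n a_n\in L$ and $\varphi(\bigwedge_n a_n)=\bigwedge_n\varphi(a_n)$. Let $\Pi L:=\{\bigwedge_n a_n: (a_n)\text{ a }\varphi\text{-convergent decreasing sequence in }L\}$; this is a sublattice of $V$ containing $L$. $\varphi$ is $\Pi$-extendible if there is a valuation $\psi:\Pi L\to E$ with $\psi(\bigwedge_n a_n)=\bigwedge_n\varphi(a_n)$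 for every $\varphi$-convergent decreasing sequence $(a_n)$ in $L$; this $\psi$ is then unique and denoted $\Pi\varphi$. *)

From HB Require Import structures.
From mathcomp Require Import all_boot all_order all_algebra.
Unset Printing Implicit Defensive.
Import Order.TTheory GRing.Theory Num.Theory.
Local Open Scope order_scope.

Section Bounds.
Context {d : Order.disp_t} {T : porderType d}.

Definition is_inf (x : nat -> T) (m : T) : Prop :=
  (forall n, m <= x n) /\ (forall l, (forall n, l <= x n) -> l <= m).
Definition is_sup (x : nat -> T) (m : T) : Prop :=
  (forall n, x n <= m) /\ (forall u, (forall n, x n <= u) -> m <= u).
Definition has_inf (x : nat -> T) : Prop := exists m, is_inf x m.
Definition has_sup (x : nat -> T) : Prop := exists m, is_sup x m.
Definition decreasing (x : nat -> T) : Prop := forall n, x n.+1 <= x n.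
Definition increasing (x : nat -> T) : Prop := forall n, x n <= x n.+1.
End Bounds.

Definition sigma_distributive {d : Order.disp_t} (V : latticeType d) : Prop :=
  (forall (a : V) (b : nat -> V) (m : V), is_inf b m ->
      is_inf (fun n => a `|` b n) (a `|` m)) /\
  (forall (a : V) (b : nat -> V) (m : V), is_sup b m ->
      is_sup (fun n => a `&` b n) (a `&` m)).

Definition sublattice {d : Order.disp_t} {V : latticeType d} (L : V -> Prop) : Prop :=
  forall a b, L a -> L b -> L (a `&` b) /\ L (a `|` b).

Definition po_group (E : porderZmodType) : Prop :=
  forall x y z : E, (x <= y)%R -> (x + z <= y + z)%R.

Definition R_complete (E : porderZmodType) : Prop :=
  (forall x y : nat -> E, decreasing x -> decreasing y ->
     has_inf (fun n => x n + y n)%R -> has_inf x /\ has_inf y) /\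
  (forall x y : nat -> E, increasing x -> increasing y ->
     has_sup (fun n => x n + y n)%R -> has_sup x /\ has_sup y).

(* ---------- valuations on a sublattice (given as total maps, only their
   values on L matter) ---------- *)
Definition valuation {d : Order.disp_t} {V : latticeType d} {E : porderZmodType}
    (L : V -> Prop) (phi : V -> E) : Prop :=
  (forall a b, L a -> L b -> a <= b -> (phi a <= phi b)%R) /\
  (forall a b, L a -> L b -> (phi (a `&` b) + phi (a `|` b) = phi a + phi b)%R).

Definition valuation_system {d : Order.disp_t} (V : latticeType d) (L : V -> Prop)
    (E : porderZmodType) (phi : V -> E) : Prop :=
  sigma_distributive V /\ sublattice L /\ po_group E /\ R_complete E /\
  valuation L phi.

Definition seq_in {d : Order.disp_t} {V : latticeType d} (L : V -> Prop)
    (a : nat -> V) : Prop := forall n, L (a n).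

Definition phi_conv_decr {d : Order.disp_t} {V : latticeType d} {E : porderZmodType}
    (L : V -> Prop) (phi : V -> E) (a : nat -> V) : Prop :=
  seq_in L a /\ decreasing a /\ has_inf a /\ has_inf (fun n => phi (a n)).

Definition Pi_complete {d : Order.disp_t} {V : latticeType d} {E : porderZmodType}
    (L : V -> Prop) (phi : V -> E) : Prop :=
  forall a : nat -> V, phi_conv_decr L phi a ->
    forall m : V, is_inf a m ->
      L m /\ is_inf (fun n => phi (a n)) (phi m).

Definition PiL {d : Order.disp_t} {V : latticeType d} {E : porderZmodType}
    (L : V -> Prop) (phi : V -> E) : V -> Prop :=
  fun x => exists a : nat -> V, phi_conv_decr L phi a /\ is_inf a x.

Definition is_Pi_extension {d : Order.disp_t} {V : latticeType d} {E : porderZmodType}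
    (L : V -> Prop) (phi psi : V -> E) : Prop :=
  valuation (PiL L phi) psi /\
  forall a : nat -> V, phi_conv_decr L phi a ->
    forall m : V, is_inf a m -> is_inf (fun n => phi (a n)) (psi m).

Definition Pi_extendible {d : Order.disp_t} {V : latticeType d} {E : porderZmodType}
    (L : V -> Prop) (phi : V -> E) : Prop :=
  exists psi : V -> E, is_Pi_extension L phi psi.

From HB Require Import structures.
From mathcomp Require Import all_boot all_order all_algebra.
From Stdlib Require Import IndefiniteDescription.
Import Order.TTheory GRing.Theory Order.NatMonotonyTheory.
Local Open Scope order_scope.

(* Given a decreasing sequence (c_N) in Pi L, pick phi-convergent sequences
   (a^N_k)_k in L with infimum c_N and replace them by the running meets
   D^N_k = a^0_k /\ ... /\ a^N_k, which are still phi-convergent with infimum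
   c_N, and are now decreasing in N as well as in k.  The diagonal D^k_k is
   then a phi-convergent decreasing sequence in L whose infimum is inf c_N,
   and whose phi-values have infimum inf psi(c_N); so inf c_N lies in Pi L
   and psi(inf c_N) = inf psi(c_N).  Closure of phi-convergent sequences
   under meets and joins comes from phi(a /\ b) + phi(a \/ b) = phi a + phi b
   together with R-completeness of E. *)

Section Infima.
Context {d : Order.disp_t} {T : porderType d}.

Lemma is_inf_unique {x : nat -> T} {m1 m2} : is_inf x m1 -> is_inf x m2 -> m1 = m2.
Proof. by move=> [lb1 glb1] [lb2 glb2]; apply/le_anti; rewrite glb2 ?glb1. Qed.

Lemma eq_is_inf {x y : nat -> T} {m} : x =1 y -> is_inf x m -> is_inf y m.
Proof.
move=> exy [lb glb]; split=> [n|l ly]; first by rewrite -exy.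
by apply: glb => n; rewrite exy.
Qed.

Lemma lower_bound_diag (g : nat -> nat -> T) l :
  (forall k, decreasing (g ^~ k)) -> (forall N, decreasing (g N)) ->
  (forall k, l <= g k k) -> forall N k, l <= g N k.
Proof.
move=> decN deck ldiag N k; have [Nk|kN] := leqP N k.
  exact: le_trans (ldiag k) (nonincnP (decN k) _ _ Nk).
exact: le_trans (ldiag N) (nonincnP (deck N) _ _ (ltnW kN)).
Qed.

Lemma is_inf_diag {g : nat -> nat -> T} {c : nat -> T} {m} :
  (forall k, decreasing (g ^~ k)) -> (forall N, decreasing (g N)) ->
  (forall N, is_inf (g N) (c N)) -> is_inf c m -> is_inf (fun k => g k k) m.
Proof.
move=> decN deck infg [lbc glbc]; split=> [k|l ldiag].
  exact: le_trans (lbc k) ((infg k).1 k).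
apply: glbc => N; apply: (infg N).2.
exact: lower_bound_diag decN deck ldiag N.
Qed.

End Infima.

Section LatticeInfima.
Context {d : Order.disp_t} {V : latticeType d}.

Lemma is_inf_meet {a b : nat -> V} {x y} :
  is_inf a x -> is_inf b y -> is_inf (fun n => a n `&` b n) (x `&` y).
Proof.
move=> [lba glba] [lbb glbb]; split=> [n|l lab]; first exact: leI2.
rewrite lexI glba ?glbb // => n.
  exact: le_trans (lab n) (leIr _ _).
exact: le_trans (lab n) (leIl _ _).
Qed.

Lemma is_inf_join {a b : nat -> V} {x y} :
  sigma_distributive V -> decreasing a -> decreasing b ->
  is_inf a x -> is_inf b y -> is_inf (fun n => a n `|` b n) (x `|` y).
Proof.
move=> [sd _] deca decb infa infb.
split=> [n|l lab]; first exact: leU2 (infa.1 n) (infb.1 n).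
have lb_ak_y k : l <= a k `|` y.
  apply: (sd _ _ _ infb).2 => n.
  apply: (@lower_bound_diag _ _ (fun k n => a k `|` b n) l) lab k n => [n' k'|k' n'].
  - exact: leU2 (deca k') (lexx _).
  - exact: leU2 (lexx _) (decb n').
by rewrite joinC; apply: (sd _ _ _ infa).2 => k; rewrite joinC.
Qed.

End LatticeInfima.

Section POGroupInfima.
Context {E : porderZmodType} (poE : po_group E).

Lemma po_group_leD {x y z t : E} : x <= y -> z <= t -> (x + z <= y + t)%R.
Proof.
move=> lexy lezt; apply: le_trans (poE _ _ z lexy) _.
by rewrite !(addrC y); exact: poE.
Qed.

Lemma is_inf_add {x y : nat -> E} {al be} :
  decreasing x -> decreasing y -> is_inf x al -> is_inf y be ->
  is_inf (fun n => x n + y n)%R (al + be)%R.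
Proof.
move=> decx decy [lbx glbx] [lby glby].
split=> [n|l lxy]; first exact: po_group_leD.
have lb_xm_y m n : (l <= x m + y n)%R.
  apply: (@lower_bound_diag _ _ (fun m n => x m + y n)%R l) lxy m n => [n' m'|m' n'].
  - exact: po_group_leD (decx m') (lexx _).
  - exact: po_group_leD (lexx _) (decy n').
have lb_l_xm m : (l - x m <= be)%R.
  by apply: glby => n; have := poE _ _ (- x m)%R (lb_xm_y m n); rewrite addrAC subrr add0r.
have lb_l_be m : (l - be <= x m)%R.
  by have := poE _ _ (x m - be)%R (lb_l_xm m); rewrite addrA subrK addrCA subrr addr0.
by have := poE _ _ be (glbx _ lb_l_be); rewrite subrK.
Qed.

End POGroupInfima.

Section ValuationSystem.
Variables (d : Order.disp_t) (V : latticeType d) (L : V -> Prop).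
Variables (E : porderZmodType) (phi : V -> E).
Hypothesis VS : valuation_system V L E phi.

Lemma phi_conv_decr_meet_join {a b : nat -> V} :
  phi_conv_decr L phi a -> phi_conv_decr L phi b ->
  phi_conv_decr L phi (fun n => a n `&` b n) /\
  phi_conv_decr L phi (fun n => a n `|` b n).
Proof.
have [sd [sl [poE [[rcinf _] [mon modular]]]]] := VS.
move=> [La [deca [[x infa] [al infpa]]]] [Lb [decb [[y infb] [be infpb]]]].
have Lmeet n : L (a n `&` b n) by have [] := sl _ _ (La n) (Lb n).
have Ljoin n : L (a n `|` b n) by have [] := sl _ _ (La n) (Lb n).
have decpa : decreasing (fun n => phi (a n)) by move=> n; exact: mon.
have decpb : decreasing (fun n => phi (b n)) by move=> n; exact: mon.
have [infpm infpj] : has_inf (fun n => phi (a n `&` b n)) /\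
                     has_inf (fun n => phi (a n `|` b n)).
  apply: rcinf => [n|n|].
  - by apply: mon; rewrite ?Lmeet ?leI2.
  - by apply: mon; rewrite ?Ljoin ?leU2.
  exists (al + be)%R; have := is_inf_add poE decpa decpb infpa infpb.
  by apply: eq_is_inf => n; rewrite modular.
split; do 2 (split=> //).
- by move=> n; exact: leI2.
- by split=> //; exists (x `&` y); exact: is_inf_meet.
- by move=> n; exact: leU2.
- by split=> //; exists (x `|` y); exact: is_inf_join.
Qed.

Lemma sublattice_PiL : sublattice (PiL L phi).
Proof.
move=> x y [a [conva infa]] [b [convb infb]].
have [convm convj] := phi_conv_decr_meet_join conva convb.
split; [exists (fun n => a n `&` b n) | exists (fun n => a n `|` b n)]; split=> //.
  exact: is_inf_meet.
exact: is_inf_join VS.1 conva.2.1 convb.2.1 infa infb.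
Qed.

Fixpoint running_meet (A : nat -> nat -> V) (N k : nat) : V :=
  if N is N'.+1 then running_meet A N' k `&` A N k else A 0%N k.

Lemma running_meet_conv {A : nat -> nat -> V} {c : nat -> V} :
  decreasing c -> (forall N, phi_conv_decr L phi (A N) /\ is_inf (A N) (c N)) ->
  forall N, phi_conv_decr L phi (running_meet A N) /\
            is_inf (running_meet A N) (c N).
Proof.
move=> decc convA; elim=> [|N [convD infD]]; first exact: convA.
have [convAN infAN] := convA N.+1.
split; first exact: (phi_conv_decr_meet_join convD convAN).1.
by rewrite -(meet_r (decc N)); exact: is_inf_meet infD infAN.
Qed.

Lemma Pi_complete_PiL (psi : V -> E) :
  (forall a, phi_conv_decr L phi a ->
     forall m, is_inf a m -> is_inf (fun n => phi (a n)) (psi m)) ->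
  Pi_complete (PiL L phi) psi.
Proof.
have [_ [_ [_ [_ [mon _]]]]] := VS.
move=> ext c [PiLc [decc [_ [ga infpc]]]] m infc.
have [A convA] := functional_choice _ PiLc.
have convD := running_meet_conv decc convA.
pose D := running_meet A.
have decD N : decreasing (D N) by have [[_ []]] := convD N.
have decDN k : decreasing (D ^~ k) by move=> N; exact: leIl.
have LD N k : L (D N k) by have [[]] := convD N.
have infdiag : is_inf (fun k => D k k) m.
  by apply: is_inf_diag decDN decD _ infc => N; have [] := convD N.
have infpdiag : is_inf (fun k => phi (D k k)) ga.
  apply: (@is_inf_diag _ _ (fun N k => phi (D N k)) _ _ _ _ _ infpc).
  - by move=> k N; exact: mon (LD _ _) (LD _ _) (decDN _ _).
  - by move=> N k; exact: mon (LD _ _) (LD _ _) (decD _ _).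
  - by move=> N; have [convDN infDN] := convD N; exact: ext convDN _ infDN.
have convdiag : phi_conv_decr L phi (fun k => D k k).
  split=> [k|]; first exact: LD.
  split; last by split; [exists m | exists ga].
  by move=> k; exact: le_trans (decDN k.+1 k) (decD k k).
split; first by exists (fun k => D k k).
by rewrite (is_inf_unique (ext _ convdiag _ infdiag) infpdiag).
Qed.

End ValuationSystem.

Theorem lemma5p4 (d : Order.disp_t) (V : latticeType d) (L : V -> Prop)
    (E : porderZmodType) (phi : V -> E) :
  valuation_system V L E phi ->
  Pi_extendible L phi ->
  forall psi : V -> E, is_Pi_extension L phi psi ->
    valuation_system V (PiL L phi) E psi /\ Pi_complete (PiL L phi) psi.
Proof.
move=> VS _ psi [val_psi ext].
have [sd [_ [poE [rc _]]]] := VS.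
split; last exact: Pi_complete_PiL.
by split=> //; split; [exact: sublattice_PiL | split].
Qed.
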